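(* For every $k\ge1$, the homomorphisms $\varphi_k\colon G_{k-1}\to\mathbb{Z}$ and $\psi_k\colon H_{k-1}\to\mathbb{Z}$ defined below are invariant under conjugation by $\mathbb{F}_2$: $\varphi_k(hgh^{-1})=\varphi_k(g)$ for all $g\in G_{k-1}$, $h\in\mathbb{F}_2$, and $\psi_k(hgh^{-1})=\psi_k(g)$ for all $g\in H_{k-1}$, $h\in\mathbb{F}_2$ (in particular $G_{k-1}$ and $H_{k-1}$ are normal in $\mathbb{F}_2$).
   Context: $\mathbb{F}_2$ is the free group on $x,y$. Let $\tilde K$ be the graph with vertex set $\mathbb{Z}^2$ and oriented edges $x^iy^jX$ from $(i,j)$ to $(i+1,j)$ and $x^iy^jY$ from $(i,j)$ to $(i,j+1)$. A $1$-chain is written $\alpha=P_\alpha(x,y)X+Q_\alpha(x,y)Y$ with $P_\alpha,Q_\alpha$ integer Laurent polynomials (coefficient of $x^iy^j$ in $P_\alpha$ = coefficient of edge $x^iy^jX$, similarly for $Q_\alpha$). For $g\in[\mathbb{F}_2,\mathbb{F}_2]$ written as a word in $x^{\pm1},y^{\pm1}$, the cycle $\alpha_g$ is the $1$-cycle traced by the lattice path from $(0,0)$ in which $x,x^{-1},y,y^{-1}$ move by $(1,0),(-1,0),(0,1),(0,-1)$ along the corresponding edges, each edge counted with sign $+1$ if traversed in its orientation and $-1$ otherwise; its homology class depends only on $g$. Put $f_g(y)=P_{\alpha_g}(1,y)$ and $g_g(x)=Q_{\alpha_g}(x,1)$. Set $G_0=H_0=[\mathbb{F}_2,\mathbb{F}_2]$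 and inductively, for $k\ge1$, $\varphi_k(g)=f_g^{(k)}(1)/k!$ for $g\in G_{k-1}$, $\psi_k(g)=g_g^{(k)}(1)/k!$ for $g\in H_{k-1}$ (integers, since the $k$th derivative of an integer Laurent polynomial is divisible by $k!$), $G_k=\ker\varphi_k$, $H_k=\ker\psi_k$. These $\varphi_k,\psi_k$ are group homomorphisms to $\mathbb{Z}$. *)

From HB Require Import structures.
From mathcomp Require Import all_boot all_order all_algebra.
From Stdlib Require Import Relations.
Set Implicit Arguments. Unset Strict Implicit. Unset Printing Implicit Defensive.
Import Order.TTheory GRing.Theory Num.Theory.
Local Open Scope ring_scope.

(* Letters of the free group F_2 on x, y:  Lx = x, LxI = x^-1, Ly = y, LyI = y^-1 *)
Inductive letter := Lx | LxI | Ly | LyI.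
Definition word := seq letter.

Definition inv_letter (a : letter) : letter :=
  match a with Lx => LxI | LxI => Lx | Ly => LyI | LyI => Ly end.

(* group operations on representatives: product = concatenation *)
Definition winv (w : word) : word := rev (map inv_letter w).
Definition wconj (h g : word) : word := h ++ g ++ winv h.

Inductive red1 : word -> word -> Prop :=
  | red1_step u v a : red1 (u ++ a :: inv_letter a :: v) (u ++ v).
Definition freeeq : word -> word -> Prop := clos_refl_sym_trans word red1.

Inductive comm_sub : word -> Prop :=
  | cs_nil : comm_sub [::]
  | cs_comm a b : comm_sub (a ++ b ++ winv a ++ winv b)
  | cs_cat u v : comm_sub u -> comm_sub v -> comm_sub (u ++ v)
  | cs_inv u : comm_sub u -> comm_sub (winv u)
  | cs_feq u v : freeeq u v -> comm_sub u -> comm_sub v.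

(* The 1-chain alpha_g traced by the lattice path from p: list of signed
   edges (isX, start vertex (i,j), sign).  Edge x^i y^j X goes (i,j)->(i+1,j),
   x^i y^j Y goes (i,j)->(i,j+1). *)
Fixpoint chain (p : int * int) (w : word) : seq (bool * (int * int) * int) :=
  match w with
  | [::] => [::]
  | a :: w' =>
    let: (i, j) := p in
    match a with
    | Lx  => (true, (i, j), 1) :: chain (i + 1, j) w'
    | LxI => (true, (i - 1, j), -1) :: chain (i - 1, j) w'
    | Ly  => (false, (i, j), 1) :: chain (i, j + 1) w'
    | LyI => (false, (i, j - 1), -1) :: chain (i, j - 1) w'
    end
  end.

Definition alpha (g : word) := chain (0, 0) g.

(* A one-variable integer Laurent polynomial  sum c t^e  as a list of
   (coefficient c, exponent e) terms. *)
Definition laurent := seq (int * int).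
Definition lderiv (p : laurent) : laurent := map (fun t => (t.1 * t.2, t.2 - 1)) p.
Definition lderivn (k : nat) (p : laurent) : laurent := iter k lderiv p.
Definition leval1 (p : laurent) : int := \sum_(t <- p) t.1.

(* f_g(y) = P_{alpha_g}(1,y) ;  g_g(x) = Q_{alpha_g}(x,1) *)
Definition fpoly (g : word) : laurent :=
  [seq (e.2, e.1.2.2) | e <- alpha g & e.1.1].
Definition gpoly (g : word) : laurent :=
  [seq (e.2, e.1.2.1) | e <- alpha g & ~~ e.1.1].

Definition phi (k : nat) (g : word) : rat :=
  (leval1 (lderivn k (fpoly g)))%:~R / (k`!)%:R.
Definition psi (k : nat) (g : word) : rat :=
  (leval1 (lderivn k (gpoly g)))%:~R / (k`!)%:R.

Fixpoint Gk (k : nat) (g : word) : Prop :=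
  match k with 0 => comm_sub g | k'.+1 => Gk k' g /\ phi k g = 0 end.
Fixpoint Hk (k : nat) (g : word) : Prop :=
  match k with 0 => comm_sub g | k'.+1 => Hk k' g /\ psi k g = 0 end.

(* The lattice path of h g h^-1 follows the path of h, then the path of g
   translated by the endpoint (a, b) of h, and then, since the path of g
   in [F_2, F_2] is closed, the path of h backwards, which cancels the first
   piece in the 1-chain.  Hence f_{hgh^-1}(y) = y^b f_g(y) and
   g_{hgh^-1}(x) = x^a g_g(x).  Multiplying by t^{+-1} changes the j-th
   derivative at 1 by j times the (j-1)-th one, so when the polynomial vanishes
   to order k at 1 -- f_g(1) is the x-exponent sum of g, hence 0, and
   phi_1, ..., phi_(k-1) vanish on G_(k-1) -- its derivatives of order at most
   k at 1 are unchanged. *)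

From mathcomp Require Import all_boot all_order all_algebra.
From mathcomp Require Import ring.
From Stdlib Require Import Relations.
Set Implicit Arguments. Unset Strict Implicit. Unset Printing Implicit Defensive.
Import GRing.Theory Num.Theory.
Local Open Scope ring_scope.

Section Falling.
Variable R : comNzRingType.

Definition falling (x : R) (k : nat) : R := \prod_(i < k) (x - i%:R).

Lemma falling0 x : falling x 0 = 1.
Proof. by rewrite /falling big_ord0. Qed.

Lemma fallingSr x k : falling x k.+1 = falling x k * (x - k%:R).
Proof. by rewrite /falling big_ord_recr. Qed.

Lemma fallingSl x k : falling x k.+1 = x * falling (x - 1) k.
Proof.
rewrite /falling big_ord_recl subr0; congr (_ * _); apply: eq_bigr => i _.
rewrite -addrA -opprD; congr (_ - _).
by rewrite lift0 -natr1 addrC.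
Qed.

Lemma falling_addr1 x k : falling (x + 1) k.+1 = falling x k.+1 + k.+1%:R * falling x k.
Proof. by rewrite fallingSl addrK fallingSr -natr1; ring. Qed.

End Falling.

(* [lmoment k p] is the k-th derivative of p at 1, see [leval1_lderivn]. *)
Definition lmoment (k : nat) (p : laurent) : int := \sum_(t <- p) t.1 * falling t.2 k.

Lemma lderivnE k p : lderivn k p = [seq (t.1 * falling t.2 k, t.2 - k%:R) | t <- p].
Proof.
elim: k => [|k IHk].
  by rewrite -[LHS]map_id; apply: eq_map => -[c e] /=; rewrite falling0 mulr1 subr0.
rewrite /lderivn iterS -/(lderivn k p) IHk /lderiv -map_comp.
by apply: eq_map => -[c e] /=; rewrite fallingSr mulrA -natr1 opprD addrA.
Qed.

Lemma leval1_lderivn k p : leval1 (lderivn k p) = lmoment k p.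
Proof. by rewrite lderivnE /leval1 big_map. Qed.

Definition lshift (b : int) (p : laurent) : laurent := [seq (t.1, t.2 + b) | t <- p].
Definition lopp (p : laurent) : laurent := [seq (- t.1, t.2) | t <- p].

Lemma lshift0 p : lshift 0 p = p.
Proof. by rewrite -[RHS]map_id; apply: eq_map => -[c e]; rewrite /= addr0. Qed.

Lemma lshiftD a b p : lshift a (lshift b p) = lshift (b + a) p.
Proof. by rewrite /lshift -map_comp; apply: eq_map => t; rewrite /= addrA. Qed.

Lemma lshift_cat b p q : lshift b (p ++ q) = lshift b p ++ lshift b q.
Proof. exact: map_cat. Qed.

Lemma lmoment_cat k p q : lmoment k (p ++ q) = lmoment k p + lmoment k q.
Proof. by rewrite /lmoment big_cat. Qed.

Lemma lmoment_rev k p : lmoment k (rev p) = lmoment k p.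
Proof. by rewrite /lmoment big_rev. Qed.

Lemma lmoment_lopp k p : lmoment k (lopp p) = - lmoment k p.
Proof. by rewrite /lmoment big_map -sumrN; apply: eq_bigr => t _; rewrite mulNr. Qed.

Lemma lmoment_lshift1 k p : lmoment k (lshift 1 p) = lmoment k p + k%:R * lmoment k.-1 p.
Proof.
rewrite /lmoment big_map mulr_sumr -big_split; apply: eq_bigr => t _ /=.
case: k => [|k]; first by rewrite !falling0 mul0r addr0.
by rewrite falling_addr1; ring.
Qed.

Definition vanishes_to_order (k : nat) (p : laurent) := forall j, (j < k)%N -> lmoment j p = 0.

Lemma lmoments_lshift1 k p q : vanishes_to_order k p ->
  (forall j, (j <= k)%N -> lmoment j q = lmoment j p) <->
  (forall j, (j <= k)%N -> lmoment j (lshift 1 q) = lmoment j p).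
Proof.
move=> pk; split=> [qp j jk | q1p].
  rewrite lmoment_lshift1 !qp //; last exact: leq_trans (leq_pred j) jk.
  case: j jk => [|j] jk; first by rewrite mul0r addr0.
  by rewrite (pk j) // mulr0 addr0.
elim=> [|j IHj] jk; first by rewrite -q1p // lmoment_lshift1 mul0r addr0.
by have := q1p j.+1 jk; rewrite lmoment_lshift1 IHj ?(ltnW jk) // (pk j jk) mulr0 addr0.
Qed.

Lemma lmoments_lshift b k p : vanishes_to_order k p ->
  forall j, (j <= k)%N -> lmoment j (lshift b p) = lmoment j p.
Proof.
move=> pk; elim/int_ind: b => [j _|n IHn|n IHn].
- by rewrite lshift0.
- by move: IHn; rewrite (lmoments_lshift1 _ pk) lshiftD -[n.+1]addn1 PoszD.
- by apply/(lmoments_lshift1 _ pk); rewrite lshiftD -[n.+1]addn1 PoszD opprD addrNK.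
Qed.

Lemma inv_letterK : involutive inv_letter.
Proof. by case. Qed.

Lemma winv_cons a u : winv (a :: u) = winv u ++ [:: inv_letter a].
Proof. by rewrite /winv map_cons rev_cons cats1. Qed.

Lemma freeeq_cancel u v w : freeeq (u ++ winv v ++ v ++ w) (u ++ w).
Proof.
elim: v u w => [|a v IHv] u w /=; first exact: rst_refl.
apply: (rst_trans _ _ _ (u ++ winv v ++ v ++ w)); last exact: IHv.
apply: rst_step; rewrite winv_cons -!catA /=.
have := red1_step (u ++ winv v) (v ++ w) (inv_letter a).
by rewrite inv_letterK -!catA.
Qed.

Lemma comm_sub_conj h g : comm_sub g -> comm_sub (wconj h g).
Proof.
move=> cg; apply: cs_feq (cs_cat (cs_comm h g) cg).
have := freeeq_cancel (h ++ g ++ winv h) g [::].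
by rewrite !cats0 /wconj -!catA.
Qed.

Lemma comm_sub_additive (V : zmodType) (f : word -> V) :
    (forall u v, f (u ++ v) = f u + f v) -> (forall u, f (winv u) = - f u) ->
  forall g, comm_sub g -> f g = 0.
Proof.
move=> fD fV.
have f0 : f [::] = 0 by apply: (addIr (f [::])); rewrite add0r -fD.
have f_red1 u v : red1 u v -> f u = f v.
  case=> {}u {}v a; rewrite -[a :: _]/([:: a] ++ winv [:: a] ++ v).
  by rewrite !fD fV addNKr.
move=> g; elim=> [|a b|u v _ fu _ fv|u _ fu|u v uv _ fu].
- exact: f0.
- by rewrite !fD !fV addrCA addNKr subrr.
- by rewrite fD fu fv addr0.
- by rewrite fV fu oppr0.
- by rewrite -fu; elim: uv => {u v fu} [u v /f_red1| | u v _ -> | u v w _ -> _ ->].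
Qed.

Definition letter_deg (a : letter) : int * int :=
  match a with Lx => (1, 0) | LxI => (-1, 0) | Ly => (0, 1) | LyI => (0, -1) end.

Definition deg (w : word) : int * int := \sum_(a <- w) letter_deg a.

Lemma deg_cat u v : deg (u ++ v) = deg u + deg v.
Proof. by rewrite /deg big_cat. Qed.

Lemma deg_winv u : deg (winv u) = - deg u.
Proof. by rewrite /deg big_rev big_map -sumrN; apply: eq_bigr => -[]. Qed.

Lemma pair_addE (a b c d : int) : (a, b) + (c, d) = (a + c, b + d).
Proof. by []. Qed.

Notation edge := (bool * (int * int) * int)%type.

Definition etrans (d : int * int) (e : edge) : edge := (e.1.1, e.1.2 + d, e.2).
Definition eopp (e : edge) : edge := (e.1, - e.2).

Lemma chain_translate p d w : chain (p + d) w = map (etrans d) (chain p w).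
Proof.
elim: w p => [|a w IHw] [i j] //=.
by case: a; rewrite /= -IHw /= ?(addrAC i d.1) ?(addrAC j d.2).
Qed.

Lemma chain_cat p u v : chain p (u ++ v) = chain p u ++ chain (p + deg u) v.
Proof.
elim: u p => [|a u IHu] p; first by rewrite /deg big_nil addr0.
case: p => i j; rewrite /deg big_cons -/(deg u).
by case: a; rewrite /= IHu addrA pair_addE ?addr0.
Qed.

Lemma chain_winv p h : chain (p + deg h) (winv h) = rev (map eopp (chain p h)).
Proof.
elim: h p => [|a h IHh] p; first by [].
rewrite winv_cons chain_cat deg_winv /deg big_cons -/(deg h) !addrA IHh addrK.
by case: p => i j; case: a; rewrite pair_addE ?addr0 /= rev_cons cats1 ?addrK.
Qed.

Definition coord (s : bool) (v : int * int) : int := if s then v.2 else v.1.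

Lemma coord0 s : coord s 0 = 0.
Proof. by case: s. Qed.

Lemma coordN s d : coord s (- d) = - coord s d.
Proof. by case: s. Qed.

(* [edge_poly true] lists the X-edges by their y-coordinate, giving P(1, y);
   [edge_poly false] lists the Y-edges by their x-coordinate, giving Q(x, 1). *)
Definition edge_poly (s : bool) (c : seq edge) : laurent :=
  [seq (e.2, coord s e.1.2) | e <- c & e.1.1 == s].

Lemma edge_poly_cat s c1 c2 : edge_poly s (c1 ++ c2) = edge_poly s c1 ++ edge_poly s c2.
Proof. by rewrite /edge_poly filter_cat map_cat. Qed.

Lemma edge_poly_translate s d c :
  edge_poly s (map (etrans d) c) = lshift (coord s d) (edge_poly s c).
Proof. by rewrite /edge_poly /lshift filter_map -!map_comp; case: s. Qed.

Lemma edge_poly_rev_opp s c : edge_poly s (rev (map eopp c)) = rev (lopp (edge_poly s c)).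
Proof. by rewrite /edge_poly /lopp filter_rev map_rev filter_map -!map_comp. Qed.

Definition wpoly (s : bool) (w : word) : laurent := edge_poly s (alpha w).

Lemma wpoly_cat s u v : wpoly s (u ++ v) = wpoly s u ++ lshift (coord s (deg u)) (wpoly s v).
Proof. by rewrite /wpoly /alpha chain_cat chain_translate edge_poly_cat edge_poly_translate. Qed.

Lemma wpoly_winv s u : wpoly s (winv u) = lshift (- coord s (deg u)) (rev (lopp (wpoly s u))).
Proof.
(* the path of u^-1 is the reversed path of u, translated back by -deg u *)
rewrite /wpoly /alpha -[X in chain X (winv u)](addrK (deg u) (0, 0)).
by rewrite chain_translate chain_winv edge_poly_translate edge_poly_rev_opp coordN.
Qed.

Lemma comm_sub_deg g : comm_sub g -> deg g = 0.
Proof. exact: comm_sub_additive deg_cat deg_winv g. Qed.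

Lemma lmoment0_lshift b p : lmoment 0 (lshift b p) = lmoment 0 p.
Proof.
have p0 : vanishes_to_order 0 p by [].
exact: lmoments_lshift p0 0 (leqnn 0).
Qed.

Lemma comm_sub_lmoment0 s g : comm_sub g -> lmoment 0 (wpoly s g) = 0.
Proof.
apply: (@comm_sub_additive _ (fun w => lmoment 0 (wpoly s w))) => [u v | u].
  by rewrite wpoly_cat lmoment_cat lmoment0_lshift.
by rewrite wpoly_winv lmoment0_lshift lmoment_rev lmoment_lopp.
Qed.

Lemma lmoment_wpoly_conj s h g j : deg g = 0 ->
  lmoment j (wpoly s (wconj h g)) = lmoment j (lshift (coord s (deg h)) (wpoly s g)).
Proof.
move=> g0; rewrite /wconj !wpoly_cat wpoly_winv g0 coord0 lshift0 lshift_cat lshiftD addNr lshift0.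
by rewrite !lmoment_cat lmoment_rev lmoment_lopp addrCA subrr addr0.
Qed.

Lemma lmoments_wpoly_conj s k h g : comm_sub g -> vanishes_to_order k (wpoly s g) ->
  forall j, (j <= k)%N -> lmoment j (wpoly s (wconj h g)) = lmoment j (wpoly s g).
Proof.
move=> cg gk j jk.
by rewrite lmoment_wpoly_conj ?(comm_sub_deg cg) // (lmoments_lshift _ gk jk).
Qed.

Lemma wpoly_conj_invariant s n h g : comm_sub g -> vanishes_to_order n.+1 (wpoly s g) ->
  lmoment n.+1 (wpoly s (wconj h g)) = lmoment n.+1 (wpoly s g) /\
  comm_sub (wconj h g) /\ vanishes_to_order n.+1 (wpoly s (wconj h g)).
Proof.
move=> cg gn; have conjE := lmoments_wpoly_conj h cg gn.
split; first exact: conjE.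
split; first exact: comm_sub_conj.
by move=> j jn; rewrite conjE ?gn // ltnW.
Qed.

Lemma intr_divfact_eq0 (R : numFieldType) (m : int) k : (m%:~R / (k`!)%:R = 0 :> R) <-> m = 0.
Proof.
split=> [/eqP|->]; last by rewrite mul0r.
by rewrite mulf_eq0 invr_eq0 pnatr_eq0 intr_eq0 eqn0Ngt fact_gt0 orbF => /eqP.
Qed.

Lemma fpolyE g : fpoly g = wpoly true g.
Proof. by congr map; apply: eq_filter => e; rewrite eqb_id. Qed.

Lemma gpolyE g : gpoly g = wpoly false g.
Proof. by congr map; apply: eq_filter => e; rewrite eqbF_neg. Qed.

Lemma phiE k g : phi k g = (lmoment k (wpoly true g))%:~R / (k`!)%:R.
Proof. by rewrite /phi leval1_lderivn fpolyE. Qed.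

Lemma psiE k g : psi k g = (lmoment k (wpoly false g))%:~R / (k`!)%:R.
Proof. by rewrite /psi leval1_lderivn gpolyE. Qed.

Section KernelTower.
Variables (s : bool) (T : nat -> word -> Prop).
Hypothesis T0 : forall g, T 0%N g <-> comm_sub g.
Hypothesis TS : forall n g, T n.+1 g <-> T n g /\ lmoment n.+1 (wpoly s g) = 0.

Lemma kernel_towerE n g : T n g <-> comm_sub g /\ vanishes_to_order n.+1 (wpoly s g).
Proof.
elim: n => [|n IHn].
  rewrite T0; split=> [cg | [] //]; split=> // -[_|//]; exact: comm_sub_lmoment0.
rewrite TS IHn; split=> [[[cg gn] gSn] | [cg gSn]].
  by split=> // j; rewrite ltnS leq_eqVlt => /predU1P [-> | /gn].
by do !split=> //; [move=> j /ltnW/gSn | exact: gSn].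
Qed.

End KernelTower.

Lemma Gk_vanishing n g : Gk n g <-> comm_sub g /\ vanishes_to_order n.+1 (wpoly true g).
Proof. by apply: kernel_towerE => // {}n {}g; rewrite /= phiE intr_divfact_eq0. Qed.

Lemma Hk_vanishing n g : Hk n g <-> comm_sub g /\ vanishes_to_order n.+1 (wpoly false g).
Proof. by apply: kernel_towerE => // {}n {}g; rewrite /= psiE intr_divfact_eq0. Qed.

Theorem lemma3p3 (k : nat) : (1 <= k)%N ->
  (forall g h : word, Gk k.-1 g ->
     phi k (wconj h g) = phi k g /\ Gk k.-1 (wconj h g)) /\
  (forall g h : word, Hk k.-1 g ->
     psi k (wconj h g) = psi k g /\ Hk k.-1 (wconj h g)).
Proof.
case: k => [//|n] _ /=; split=> g h.
  by rewrite !Gk_vanishing !phiE => -[cg /(wpoly_conj_invariant h cg) [->]].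
by rewrite !Hk_vanishing !psiE => -[cg /(wpoly_conj_invariant h cg) [->]].
Qed.
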